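(* Let $m,n$ be positive integers, $a=\min(m,n)$ and $b=\max(m,n)$. Then $J(\mathbf{P}_{m,n})$, ordered by inclusion, is a distributive lattice of rank $\frac{-a^3+3a^2b+3ab+a}{6}$.
   Context: The poset $\mathbf{P}_{m,n}$ has elements the integer triples $(i,j,k)$ with $0\le k\le m-1$, $k\le j\le n-1$, $k\le i\le m-1$, and partial order generated by the covering relations: $(i,j,k)$ covers each of $(i+1,j,k)$, $(i,j+1,k)$, $(i-1,j,k-1)$, $(i,j-1,k-1)$ that is an element of $\mathbf{P}_{m,n}$. For a poset $P$, $J(P)$ denotes the set of order ideals of $P$ (subsets $X$ with $y\in X,\ z\le y\Rightarrow z\in X$). *)

From mathcomp Require Import all_boot.
Set Implicit Arguments. Unset Strict Implicit. Unset Printing Implicit Defensive.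

(* Elements of P_{m,n}: triples (i,j,k) with 0<=k<=m-1, k<=j<=n-1, k<=i<=m-1.
   Coordinates: t.1.1 = i : 'I_m, t.1.2 = j : 'I_n, t.2 = k : 'I_m. *)
Definition Pcond (m n : nat) (t : 'I_m * 'I_n * 'I_m) : bool :=
  (t.2 <= t.1.2) && (t.2 <= t.1.1).

Definition Pelt (m n : nat) := {t : 'I_m * 'I_n * 'I_m | Pcond t}.

Definition pi (m n : nat) (x : Pelt m n) : nat := (val x).1.1.
Definition pj (m n : nat) (x : Pelt m n) : nat := (val x).1.2.
Definition pk (m n : nat) (x : Pelt m n) : nat := (val x).2.

Definition covers (m n : nat) (x y : Pelt m n) : bool :=
  [|| [&& pi y == (pi x).+1, pj y == pj x & pk y == pk x],
      [&& pi y == pi x, pj y == (pj x).+1 & pk y == pk x],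
      [&& 0 < pk x, pi y == (pi x).-1, pj y == pj x & pk y == (pk x).-1]
    | [&& 0 < pk x, pi y == pi x, pj y == (pj x).-1 & pk y == (pk x).-1]].

Definition Ple (m n : nat) (y x : Pelt m n) : bool :=
  connect (fun z z' : Pelt m n => covers z' z) y x.

Definition is_ideal (m n : nat) (X : {set Pelt m n}) : Prop :=
  forall y z : Pelt m n, y \in X -> Ple z y -> z \in X.

Definition is_chain (m n : nat) (C : {set {set Pelt m n}}) : Prop :=
  (forall X, X \in C -> is_ideal X) /\
  (forall X Y, X \in C -> Y \in C -> (X \subset Y) || (Y \subset X)).

Definition is_maximal_chain (m n : nat) (C : {set {set Pelt m n}}) : Prop :=
  is_chain C /\ (forall D, is_chain D -> C \subset D -> D = C).

From Pilot Require Import Defs.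
From mathcomp Require Import all_boot zify.
From Stdlib Require Import Classical.

Set Implicit Arguments.
Unset Strict Implicit.
Unset Printing Implicit Defensive.

(* The quantity 2k + (m - i) + (n - j) drops by exactly one along every
   covering relation of P_{m,n}, so the generated relation is antisymmetric.
   In any finite poset the order ideals are closed under union and
   intersection, and an ideal X strictly inside an ideal Y can be enlarged by
   a minimal element of Y \ X; hence a maximal chain of ideals gains one
   element at each step and has |P| + 1 members. Finally
   |P_{m,n}| = sum_{k<a} (a - k)(b - k), which is the stated polynomial. *)

Section DownsetChains.
Variables (T : finType) (le : rel T).

Definition down_closed (X : {set T}) : Prop :=
  forall y z, y \in X -> le z y -> z \in X.

Definition downset_chain (C : {set {set T}}) : Prop :=
  (forall X, X \in C -> down_closed X) /\
  (forall X Y, X \in C -> Y \in C -> (X \subset Y) || (Y \subset X)).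

Definition maximal_downset_chain (C : {set {set T}}) : Prop :=
  downset_chain C /\ (forall D, downset_chain D -> C \subset D -> D = C).

Lemma down_closed0 : down_closed set0.
Proof. by move=> y z; rewrite in_set0. Qed.

Lemma down_closedT : down_closed setT.
Proof. by move=> y z; rewrite !in_setT. Qed.

Lemma down_closedU X Y : down_closed X -> down_closed Y -> down_closed (X :|: Y).
Proof.
move=> dcX dcY y z; rewrite !in_setU => /orP [yX | yY] zy.
  by rewrite (dcX y z).
by rewrite (dcY y z) ?orbT.
Qed.

Lemma down_closedI X Y : down_closed X -> down_closed Y -> down_closed (X :&: Y).
Proof.
by move=> dcX dcY y z; rewrite !in_setI => /andP [yX yY] zy; rewrite (dcX y z) ?(dcY y z).
Qed.

Lemma downset_chainU1 C Z : downset_chain C -> down_closed Z ->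
  (forall W, W \in C -> (Z \subset W) || (W \subset Z)) -> downset_chain (Z |: C).
Proof.
move=> [dcC cmpC] dcZ cmpZ; split=> [X | X Y].
  by case/setU1P => [-> | /dcC].
case/setU1P => [-> | XC] /setU1P [-> | YC].
- by rewrite subxx.
- exact: cmpZ.
- by rewrite orbC cmpZ.
- exact: cmpC.
Qed.

Lemma maximal_downset_chain_mem C Z : maximal_downset_chain C -> down_closed Z ->
  (forall W, W \in C -> (Z \subset W) || (W \subset Z)) -> Z \in C.
Proof.
move=> [chC maxC] dcZ cmpZ.
have <- : Z |: C = C by apply: maxC; [exact: downset_chainU1 | exact: subsetUr].
exact: setU11.
Qed.

Lemma maximal_downset_chain0 C : maximal_downset_chain C -> set0 \in C.
Proof.
move=> maxC; apply: (maximal_downset_chain_mem maxC down_closed0) => W _.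
by rewrite sub0set.
Qed.

Lemma maximal_downset_chainT C : maximal_downset_chain C -> setT \in C.
Proof.
move=> maxC; apply: (maximal_downset_chain_mem maxC down_closedT) => W _.
by rewrite subsetT orbT.
Qed.

Lemma downset_chain_card_inj C :
  downset_chain C -> {in C &, injective (fun X : {set T} => #|X|)}.
Proof.
move=> [_ cmpC] X Y XC YC /= eq_card; apply/eqP.
case/orP: (cmpC X Y XC YC) => [sXY | sYX]; first by rewrite eqEcard sXY /= eq_card.
by rewrite eq_sym eqEcard sYX /= eq_card.
Qed.

Lemma downset_chain_extends C : downset_chain C ->
  exists D, maximal_downset_chain D /\ C \subset D.
Proof.
have [N] := ubnP #|~: C|; elim: N C => [|N IH] C; first by rewrite ltn0.
move=> ltCN chC.
case: (classic (exists2 D, downset_chain D & C \proper D)) => [[D chD ltCD] | noext].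
  have ltDN : #|~: D| < N.
    have : #|~: D| < #|~: C| by rewrite proper_card ?properC.
    lia.
  have [E [maxE sDE]] := IH D ltDN chD.
  by exists E; split=> //; apply: subset_trans sDE; apply: proper_sub.
exists C; split=> //; split=> // D chD sCD.
apply/eqP; rewrite eqEsubset sCD andbT; apply: contraT => nDC.
by case: noext; exists D; rewrite // properE sCD.
Qed.

Hypotheses (le_refl : reflexive le) (le_trans : transitive le)
  (le_anti : antisymmetric le).

Lemma down_closed_extend X Y : down_closed X -> down_closed Y -> X \proper Y ->
  exists2 z, z \in Y :\: X & down_closed (z |: X).
Proof.
move=> dcX dcY /properP [_ [z0 z0Y z0X]].
have z0D : z0 \in Y :\: X by rewrite inE z0Y z0X.
pose below z := [set w | le w z].
(* A minimiser of [#|below z|] is a minimal element of [Y :\: X]. *)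
have [z zD zmin] := arg_minnP (fun z => #|below z|) z0D.
exists z => // y w; rewrite !in_setU1 => /predU1P [-> {y} | yX] wz; last first.
  by rewrite (dcX y) ?orbT.
apply/norP => -[nwz wX].
have wD : w \in Y :\: X by rewrite inE wX (dcY z) //; case/setDP: zD.
have sub_below : below w \subset below z.
  by apply/subsetP => u; rewrite !inE => uw; apply: le_trans uw wz.
have /eqP eq_below : below w == below z by rewrite eqEcard sub_below zmin.
have : z \in below w by rewrite eq_below inE le_refl.
by rewrite inE => zw; case/eqP: nwz; apply: le_anti; rewrite wz.
Qed.

Lemma maximal_downset_chain_has_card C k : maximal_downset_chain C ->
  k <= #|T| -> exists2 X, X \in C & #|X| = k.
Proof.
move=> maxC; have [[dcC cmpC] _] := maxC.
elim: k => [_ | k IH ltkT]; first by exists set0; rewrite ?cards0 ?maximal_downset_chain0.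
have [X XC cardX] := IH (ltnW ltkT).
pose S := [set W in C | X \proper W].
have TS : setT \in S.
  rewrite inE maximal_downset_chainT // properT; apply: contraTneq ltkT => eqXT.
  by rewrite -cardX eqXT cardsT ltnn.
have [Y SY Ymin] := arg_minnP (fun W : {set T} => #|W|) TS.
have /setIdP [YC ltXY] : Y \in S := SY.
have [z /setDP [zY zX] dcZ] := down_closed_extend (dcC X XC) (dcC Y YC) ltXY.
(* [Y] is the next member of [C] above [X], and [z |: X] fits between them. *)
have sZY : z |: X \subset Y by rewrite subUset sub1set zY proper_sub.
exists (z |: X); last by rewrite cardsU1 zX cardX.
apply: maximal_downset_chain_mem dcZ _ => // W WC.
case/orP: (cmpC X W XC WC) => [sXW | sWX]; last first.
  by rewrite (subset_trans sWX (subsetUr _ _)) orbT.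
have [<- | nXW] := eqVneq X W; first by rewrite subsetUr orbT.
have WS : W \in S by rewrite inE WC properEneq nXW.
have leYW := Ymin W WS.
case/orP: (cmpC Y W YC WC) => [sYW | sWY]; first by rewrite (subset_trans sZY sYW).
have /eqP -> : W == Y by rewrite eqEcard sWY leYW.
by rewrite sZY.
Qed.

Lemma card_maximal_downset_chain C : maximal_downset_chain C -> #|C| = #|T|.+1.
Proof.
move=> maxC; have [chC _] := maxC.
pose size_of (X : {set T}) : 'I_#|T|.+1 := inord #|X|.
have size_ofE X : size_of X = #|X| :> nat by rewrite inordK // ltnS max_card.
have inj_size : {in C &, injective size_of}.
  move=> X Y XC YC /(congr1 val); rewrite /= !size_ofE.
  exact: (downset_chain_card_inj chC).
suff im_size : size_of @: C = setT.
  by rewrite -(card_in_imset inj_size) im_size cardsT card_ord.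
apply/setP => i; rewrite inE; apply/imsetP.
have [X XC cardX] := maximal_downset_chain_has_card maxC (ltn_ord i).
by exists X => //; apply: val_inj; rewrite /= size_ofE.
Qed.

End DownsetChains.

Section PeltRank.
Variables m n : nat.

Definition Prank (x : Pelt m n) : nat := 2 * pk x + (m - Defs.pi x) + (n - pj x).

Lemma Pelt_bounds (x : Pelt m n) :
  [/\ Defs.pi x < m, pj x < n, pk x <= pj x & pk x <= Defs.pi x].
Proof. by case: x => [[[i j] k] kij]; rewrite /Defs.pi /pj /pk /=; case/andP: kij. Qed.

Lemma covers_rank (x y : Pelt m n) : covers x y -> Prank x = (Prank y).+1.
Proof.
rewrite /covers /Prank; case: (Pelt_bounds x) (Pelt_bounds y) => ? ? ? ? [? ? ? ?].
by case/or4P => [/and3P | /and3P | /and4P | /and4P] [] => *; lia.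
Qed.

Lemma path_rank (x : Pelt m n) p : path (fun z z' => covers z' z) x p ->
  Prank (last x p) = Prank x + size p.
Proof.
elim: p x => [|y p IH] x /=; first by rewrite addn0.
by case/andP => /covers_rank rank_y /IH ->; rewrite rank_y addSnnS.
Qed.

Lemma Ple_rank_lt (y x : Pelt m n) : Ple y x -> y != x -> Prank y < Prank x.
Proof.
case/connectP => -[|z p] yp ->; first by rewrite eqxx.
by rewrite (path_rank yp) /= addnS ltnS leq_addr.
Qed.

Lemma Ple_anti : antisymmetric (@Ple m n).
Proof.
move=> x y /andP [le_xy le_yx]; case: (eqVneq x y) => // nxy.
have nyx : y != x by rewrite eq_sym.
by have := ltn_trans (Ple_rank_lt le_xy nxy) (Ple_rank_lt le_yx nyx); rewrite ltnn.
Qed.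

End PeltRank.

Lemma sum_ord_geq m k : \sum_(i < m) (k <= i) = m - k.
Proof.
elim: m => [|m IH]; first by rewrite big_ord0.
by rewrite big_ord_recr /= IH; case: leqP; lia.
Qed.

Lemma card_Pelt m n : #|{: Pelt m n}| = \sum_(k < m) (m - k) * (n - k).
Proof.
have -> : #|{: Pelt m n}| = \sum_(i < m) \sum_(j < n) \sum_(k < m) (k <= i) * (k <= j).
  rewrite card_sig -sum1_card big_mkcond !pair_bigA.
  by apply: eq_bigr => -[[i j] k] _; rewrite inE /Pcond /= mulnb andbC; case: (_ && _).
under eq_bigr do rewrite exchange_big.
rewrite exchange_big; apply: eq_bigr => k _.
by rewrite -!sum_ord_geq big_distrl; apply: eq_bigr => i _; rewrite big_distrr.
Qed.

Lemma sum_shift_prod_closed a b : a <= b ->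
  6 * (\sum_(k < a) (a - k) * (b - k)) + a ^ 3 = 3 * a ^ 2 * b + 3 * a * b + a.
Proof.
elim: a b => [b _ | a IH [//|b] leab]; first by rewrite big_ord0.
rewrite big_ord_recl !subn0 (eq_bigr (fun k : 'I_a => (a - k) * (b - k))) => [|k _].
  by move: (IH b leab); set s := \sum_(k < a) _; nia.
by rewrite /bump /= !subSS.
Qed.

Lemma sum_shift_prod_sym m n :
  \sum_(k < m) (m - k) * (n - k) = \sum_(k < n) (n - k) * (m - k).
Proof.
wlog le_nm : m n / n <= m.
  by move=> sym; case: (leqP n m) => [/sym | /ltnW /sym ->].
rewrite (big_ord_widen m (fun k => (n - k) * (m - k)) le_nm) [RHS]big_mkcond.
apply: eq_bigr => k _; case: ltnP => [_ | le_nk]; first by rewrite mulnC.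
by rewrite (eqP le_nk) muln0.
Qed.

Lemma sum_shift_prod_minn m n :
  6 * (\sum_(k < m) (m - k) * (n - k)) + minn m n ^ 3 =
  3 * minn m n ^ 2 * maxn m n + 3 * minn m n * maxn m n + minn m n.
Proof.
case: leqP => [le_mn | /ltnW le_nm]; first exact: sum_shift_prod_closed.
by rewrite sum_shift_prod_sym sum_shift_prod_closed.
Qed.

Theorem corollary3p18 (m n : nat) (hm : 0 < m) (hn : 0 < n) :
  let a := minn m n in
  let b := maxn m n in
  (* P_{m,n} is a poset: the generated relation is antisymmetric *)
  (forall x y : Pelt m n, Ple x y -> Ple y x -> x = y) /\
  (* J(P_{m,n}) is a lattice under inclusion, with meet/join = intersection/union *)
  (forall X Y : {set Pelt m n}, is_ideal X -> is_ideal Y ->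
     is_ideal (X :|: Y) /\ is_ideal (X :&: Y)) /\
  (* ... which is distributive *)
  (forall X Y Z : {set Pelt m n}, is_ideal X -> is_ideal Y -> is_ideal Z ->
     X :&: (Y :|: Z) = (X :&: Y) :|: (X :&: Z)) /\
  (* it is graded of rank r := (-a^3 + 3a^2 b + 3ab + a)/6: maximal chains exist
     and every maximal chain has exactly r+1 elements *)
  exists r : nat,
    6 * r + a ^ 3 = 3 * a ^ 2 * b + 3 * a * b + a /\
    (exists C : {set {set Pelt m n}}, is_maximal_chain C) /\
    (forall C : {set {set Pelt m n}}, is_maximal_chain C -> #|C| = r.+1).
Proof.
move=> a b; pose le := @Ple m n.
have le_refl : reflexive le := connect0 _.
have le_trans : transitive le := connect_trans (e := _).
split; first by move=> x y le_xy le_yx; apply: Ple_anti; rewrite le_xy.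
split.
  move=> X Y dcX dcY.
  by split; [apply: (@down_closedU _ le) | apply: (@down_closedI _ le)].
split; first by move=> X Y Z _ _ _; apply: setIUr.
exists #|{: Pelt m n}|; split; first by rewrite card_Pelt sum_shift_prod_minn.
split.
  have [|C [maxC _]] := @downset_chain_extends _ le set0; last by exists C.
  by split=> X; rewrite in_set0.
exact: (card_maximal_downset_chain le_refl le_trans (@Ple_anti m n)).
Qed.
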